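(* Let $H=\langle a,b\mid a^2=ba^2b\rangle$. Then $H$ is reduced and atomic with $\mathcal A(H)=\{a,b\}$, and $\rho_k(H)=\infty$ for all $k\ge 2$.
   Context: $H$ is the monoid presented by generators $a,b$ and the single relation $a^2=ba^2b$. $\mathcal A(H)$ is its set of atoms (irreducible non-units). For $c\in H$, $\mathsf L(c)$ is the set of all $k$ such that $c$ is a product of $k$ atoms; $\mathcal U_k(H)$ is the union of all $\mathsf L(c)$ containing $k$, and $\rho_k(H)=\sup\mathcal U_k(H)$. *)

(* The monoid H = < a, b | a^2 = b a^2 b > is modelled as
   words over the alphabet {a,b} (letters: false = a, true = b) modulo the
   congruence generated by the defining relation.  All notions (units,
   atoms, lengths sets, unions of sets of lengths) are stated on words and
   are invariant under the congruence, so they are notions about H. *)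
From Stdlib Require Import List Relations.
Import ListNotations.

Definition letter := bool.
Definition ga : letter := false.
Definition gb : letter := true.
Definition word := list letter.

Inductive step : word -> word -> Prop :=
| step_rel : forall u v : word,
    step (u ++ [ga; ga] ++ v) (u ++ [gb; ga; ga; gb] ++ v).

Definition cong : word -> word -> Prop := clos_refl_sym_trans word step.

Definition is_unit (w : word) : Prop :=
  exists v : word, cong (w ++ v) [] /\ cong (v ++ w) [].

Definition reduced : Prop := forall w : word, is_unit w -> cong w [].

Definition atom (w : word) : Prop :=
  ~ is_unit w /\
  forall u v : word, cong w (u ++ v) -> is_unit u \/ is_unit v.

Definition atomic : Prop :=
  forall w : word, ~ is_unit w ->
    exists ws : list word, ws <> [] /\ Forall atom ws /\ cong w (concat ws).

Definition Lset (c : word) (k : nat) : Prop :=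
  exists ws : list word, length ws = k /\ Forall atom ws /\ cong c (concat ws).

(* m \in U_k(H) : the union of all L(c) with k \in L(c) *)
Definition Uset (k m : nat) : Prop := exists c : word, Lset c k /\ Lset c m.

(* rho_k(H) = sup U_k(H) = infinity, i.e. U_k(H) is unbounded in N *)
Definition rho_infinite (k : nat) : Prop :=
  forall N : nat, exists m : nat, N < m /\ Uset k m.

(* Both sides of the relation a^2 = b a^2 b have length 2, so the empty word
   and the one-letter words are alone in their congruence classes.  Hence 1 is
   the only unit, the atoms are exactly a and b, and every non-unit is the
   product of its letters.  Iterating the relation gives a^2 = b^n a^2 b^n, so
   a^k (k >= 2) factors into k atoms and also into k + 2n atoms. *)
From Stdlib Require Import List Relations Lia.
Import ListNotations.

Lemma cong_invariant (P : word -> Prop) :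
  (forall x y, step x y -> (P x <-> P y)) ->
  forall x y, cong x y -> (P x <-> P y).
Proof.
  intros Hstep x y C. induction C; [apply Hstep; assumption | tauto | tauto | tauto].
Qed.

Lemma step_length_ge2 x y : step x y -> 2 <= length x /\ 2 <= length y.
Proof. intros S. inversion S. rewrite !length_app. simpl. lia. Qed.

Lemma cong_short x w : length w <= 1 -> cong x w -> x = w.
Proof.
  intros Hw C. apply (cong_invariant (fun z => z = w)) with (x := x) (y := w); auto.
  intros p q S. apply step_length_ge2 in S. split; intros; subst; lia.
Qed.

Lemma is_unit_nil : is_unit [].
Proof. exists []. split; apply rst_refl. Qed.

Lemma is_unit_eq_nil w : is_unit w -> w = [].
Proof.
  intros [v [C _]]. apply cong_short in C; [|simpl; lia].
  apply app_eq_nil in C. tauto.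
Qed.

Lemma atom_letter x : atom [x].
Proof.
  split.
  - intros U. apply is_unit_eq_nil in U. discriminate.
  - intros u v C. apply rst_sym, cong_short in C; [|simpl; lia].
    destruct u as [|y u]; [left; apply is_unit_nil|].
    right. injection C as _ Huv. apply app_eq_nil in Huv as [_ ->].
    apply is_unit_nil.
Qed.

Lemma atom_length w : atom w -> length w = 1.
Proof.
  intros [NU A]. destruct w as [|x [|y r]]; [| reflexivity |].
  - exfalso. apply NU, is_unit_nil.
  - destruct (A [x] (y :: r) (rst_refl _ _ _)) as [U|U];
      apply is_unit_eq_nil in U; discriminate.
Qed.

Definition letters (w : word) : list word := map (fun x => [x]) w.

Lemma concat_letters w : concat (letters w) = w.
Proof. induction w; simpl; congruence. Qed.

Lemma Forall_atom_letters w : Forall atom (letters w).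
Proof.
  apply Forall_forall. intros z Hz. apply in_map_iff in Hz as [x [<- _]].
  apply atom_letter.
Qed.

Lemma Lset_length c w : cong c w -> Lset c (length w).
Proof.
  intros C. exists (letters w). split; [apply length_map|].
  split; [apply Forall_atom_letters | rewrite concat_letters; exact C].
Qed.

Lemma cong_pump n t :
  cong ([ga; ga] ++ t) (repeat gb n ++ [ga; ga] ++ repeat gb n ++ t).
Proof.
  induction n as [|n IH]; [apply rst_refl|].
  eapply rst_trans; [exact IH|]. apply rst_step.
  replace (repeat gb (S n) ++ [ga; ga] ++ repeat gb (S n) ++ t)
    with (repeat gb n ++ [gb; ga; ga; gb] ++ (repeat gb n ++ t)).
  - apply step_rel.
  - change (repeat gb (S n)) with (gb :: repeat gb n) at 1.
    rewrite repeat_cons, <- app_assoc. reflexivity.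
Qed.

Lemma Uset_pump k n : Uset (S (S k)) (S (S k) + 2 * n).
Proof.
  exists (repeat ga (S (S k))). split.
  - rewrite <- (repeat_length ga (S (S k))) at 2. apply Lset_length, rst_refl.
  - pose proof (Lset_length _ _ (cong_pump n (repeat ga k))) as L.
    rewrite !length_app, !repeat_length in L. simpl in L.
    replace (S (S k) + 2 * n) with (n + S (S (n + k))) by lia. exact L.
Qed.

Theorem mainTheorem6 :
  reduced /\ atomic /\
  (forall w : word, atom w <-> (cong w [ga] \/ cong w [gb])) /\
  (forall k : nat, 2 <= k -> rho_infinite k).
Proof.
  split; [|split; [|split]].
  - intros w U. rewrite (is_unit_eq_nil w U). apply rst_refl.
  - intros w NU. exists (letters w). split; [|split].
    + destruct w; [exfalso; apply NU, is_unit_nil | discriminate].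
    + apply Forall_atom_letters.
    + rewrite concat_letters. apply rst_refl.
  - intros w. split.
    + intros Aw. destruct w as [|[|] [|]]; try (apply atom_length in Aw; discriminate).
      * right. apply rst_refl.
      * left. apply rst_refl.
    + intros [C|C]; apply cong_short in C; simpl; auto; subst; apply atom_letter.
  - intros k Hk N. exists (k + 2 * S N). split; [lia|].
    destruct k as [|[|k]]; [lia | lia | apply Uset_pump].
Qed.
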